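(* Let $C$ be a binary linear $[n,k]$ code whose hull $\mathrm{Hull}(C)=C\cap C^{\perp}$ has dimension $\ell$, where $0\le\ell\le k$. Let $G$ be a $k\times n$ generator matrix of $C$ with rows $\mathbf r_1,\dots,\mathbf r_k$ and $H$ an $(n-k)\times n$ parity check matrix of $C$ with rows $\mathbf s_1,\dots,\mathbf s_{n-k}$. Suppose $\mathbf x=(x_1,\dots,x_n)\in\mathbb F_2^n$ satisfies $\mathbf x\cdot\mathbf x=0$. Put $y_i=\mathbf x\cdot\mathbf r_i$ ($1\le i\le k$) and $z_j=\mathbf x\cdot\mathbf s_j$ ($1\le j\le n-k$). Then the matrix \[ G_3=\begin{bmatrix} 1 & 0 & x_1\ \cdots\ x_n\\ y_1 & y_1 & \mathbf r_1\\ \vdots & \vdots & \vdots\\ y_k & y_k & \mathbf r_k\end{bmatrix} \] generates a binary linear $[n+2,k+1]$ code $C_3$ whose hull has dimension $\ell$, and the matrix \[ H_3=\begin{bmatrix} 0 & 1 & x_1\ \cdots\ x_n\\ z_1 & z_1 & \mathbf s_1\\ \vdots & \vdots & \vdots\\ z_{n-k} & z_{n-k} & \mathbf s_{n-k}\end{bmatrix} \] is a parity check matrix for $C_3$.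
   Context: All codes are binary linear codes; the dual is taken with respect to the standard dot product on $\mathbb F_2^n$, and $\mathrm{Hull}(C)=C\cap C^{\perp}$. A parity check matrix of $C$ is a generator matrix of $C^{\perp}$. The code $C_3$ is called Construction IV. *)

From HB Require Import structures.
From mathcomp Require Import all_boot all_order all_algebra.
Set Implicit Arguments. Unset Strict Implicit. Unset Printing Implicit Defensive.
Import GRing.Theory.
Local Open Scope ring_scope.

(* Binary codes are represented by (row spaces of) matrices over 'F_2.
   A code of length n is the row space of a matrix with n columns. *)

(* Dual code (standard dot product): all u with u . r = 0 for every row r
   of A, i.e. u *m A^T = 0. kermx (A^T) is a square matrix whose row space
   is exactly that set. *)
Definition dualmx (m n : nat) (A : 'M['F_2]_(m, n)) : 'M['F_2]_n := kermx A^T.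

Definition hull_dim (m n : nat) (A : 'M['F_2]_(m, n)) : nat :=
  \rank (A :&: dualmx A)%MS.

Definition G3mx (k n : nat) (G : 'M['F_2]_(k, n)) (x : 'rV['F_2]_n)
  : 'M['F_2]_(1 + k, (1 + 1) + n) :=
  let y : 'cV['F_2]_k := G *m x^T in
  col_mx (row_mx (row_mx (const_mx 1) (const_mx 0)) x)
         (row_mx (row_mx y y) G).

Definition H3mx (r n : nat) (H : 'M['F_2]_(r, n)) (x : 'rV['F_2]_n)
  : 'M['F_2]_(1 + r, (1 + 1) + n) :=
  let z : 'cV['F_2]_r := H *m x^T in
  col_mx (row_mx (row_mx (const_mx 0) (const_mx 1)) x)
         (row_mx (row_mx z z) H).

From HB Require Import structures.
From mathcomp Require Import all_boot all_order all_algebra.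
Import GRing.Theory.
Local Open Scope ring_scope.
Set Implicit Arguments. Unset Strict Implicit.

(* With M := [x^T x^T I_n], right multiplication by M preserves the dot
   product in characteristic 2 (M M^T = I), and the first rows a = (1,0,x) and
   c = (0,1,x) of G3 and H3 are unit vectors orthogonal to the image of M, with
   a . c = x . x = 0.  Hence G3 = [a; G M] and H3 = [c; H M] are orthogonal
   extensions of G and H by one non-isotropic row, which adds one to the rank
   and leaves the hull unchanged up to the isometry M. *)

Lemma trmx_mul_eq0 (F : fieldType) m n p (B : 'M[F]_(m, p)) (C : 'M[F]_(n, p)) :
  B *m C^T = 0 -> C *m B^T = 0.
Proof. by move=> BC; rewrite -[C]trmxK -trmx_mul BC trmx0. Qed.

Section OrthogonalExtension.

Variables (F : fieldType) (n N : nat) (M : 'M[F]_(n, N)) (a : 'rV[F]_N).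
Hypotheses (MMt : M *m M^T = 1%:M) (aat : a *m a^T = 1%:M) (aMt : a *m M^T = 0).

Lemma col_ext_mul_atr p m (A : 'M[F]_(m, n)) (D : 'M[F]_(p, 1 + m)) :
  D *m col_mx a (A *m M) *m a^T = lsubmx D.
Proof.
rewrite -{1}[D]hsubmxK mul_row_col mulmxDl -!mulmxA aat (trmx_mul_eq0 aMt).
by rewrite !mulmx0 mulmx1 addr0.
Qed.

Lemma col_ext_mul_Mtr p m (A : 'M[F]_(m, n)) (D : 'M[F]_(p, 1 + m)) :
  D *m col_mx a (A *m M) *m M^T = rsubmx D *m A.
Proof.
rewrite -{1}[D]hsubmxK mul_row_col mulmxDl -!mulmxA aMt MMt.
by rewrite mulmx0 add0r mulmx1.
Qed.

Lemma row_free_col_ext m (A : 'M[F]_(m, n)) :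
  row_free A -> row_free (col_mx a (A *m M)).
Proof.
move=> freeA; rewrite -kermx_eq0; apply/eqP.
set K := kermx _.
have /eqP KA0 : (K *m col_mx a (A *m M) == 0) by rewrite mulmx_ker.
have K_l : lsubmx K = 0 by rewrite -(col_ext_mul_atr A) KA0 mul0mx.
have /eqP : rsubmx K *m A = 0 by rewrite -(col_ext_mul_Mtr A) KA0 mul0mx.
by rewrite mulmx_free_eq0 // => /eqP K_r; rewrite -[K]hsubmxK K_l K_r row_mx0.
Qed.

Lemma col_ext_orthogonal p m (A : 'M[F]_(m, n)) (c : 'rV[F]_N)
    (B : 'M[F]_(p, n)) :
  c *m a^T = 0 -> c *m M^T = 0 -> B *m A^T = 0 ->
  col_mx c (B *m M) *m (col_mx a (A *m M))^T = 0.
Proof.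
move=> cat cMt BAt; rewrite tr_col_mx trmx_mul mul_mx_row !mul_col_mx.
rewrite cat -mulmxA (trmx_mul_eq0 aMt) mulmx0 mulmxA cMt mul0mx.
by rewrite mulmxA -(mulmxA B) MMt mulmx1 BAt !col_mx0 row_mx0.
Qed.

Lemma hull_col_ext m (A : 'M[F]_(m, n)) :
  (col_mx a (A *m M) :&: kermx (col_mx a (A *m M))^T
     == (A :&: kermx A^T) *m M)%MS.
Proof.
set E := col_mx a (A *m M).
have Et : E^T = row_mx a^T (M^T *m A^T) by rewrite tr_col_mx trmx_mul.
apply/andP; split.
- set W := (E :&: _)%MS.
  have [D defW] := submxP (capmxSl _ _ : (W <= E)%MS).
  have /eqP : W *m E^T = 0 by apply/eqP; rewrite -sub_kermx capmxSr.
  rewrite Et mul_mx_row row_mx_eq0 mulmxA => /andP[/eqP WaT0 /eqP WMA0].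
  have D_l : lsubmx D = 0 by rewrite -(col_ext_mul_atr A) -defW WaT0.
  have defWM : W *m M^T = rsubmx D *m A by rewrite defW col_ext_mul_Mtr.
  have -> : W = rsubmx D *m A *m M.
    by rewrite defW -{1}[D]hsubmxK mul_row_col D_l mul0mx add0r mulmxA.
  apply: submxMr; rewrite sub_capmx submxMl sub_kermx.
  by rewrite -defWM WMA0 eqxx.
- rewrite sub_capmx; apply/andP; split.
    apply: submx_trans (submxMr M (capmxSl A _)) _.
    by rewrite /E -addsmxE addsmxSr.
  have hullA_orth : (A :&: kermx A^T)%MS *m A^T = 0.
    by apply/eqP; rewrite -sub_kermx capmxSr.
  rewrite sub_kermx Et mul_mx_row -mulmxA (trmx_mul_eq0 aMt) mulmx0.
  by rewrite mulmxA -(mulmxA _ M) MMt mulmx1 hullA_orth row_mx0.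
Qed.

End OrthogonalExtension.

Lemma addmx_F2 m p (A : 'M['F_2]_(m, p)) : A + A = 0.
Proof. by apply/matrixP => i j; rewrite !mxE addrr_pchar2 // pchar_Fp. Qed.

Lemma const_mx11 (b : 'F_2) : const_mx b = b%:M :> 'M['F_2]_1.
Proof. by apply/matrixP => i j; rewrite !ord1 !mxE. Qed.

Definition embedmx n (x : 'rV['F_2]_n) : 'M['F_2]_(n, (1 + 1) + n) :=
  row_mx (row_mx x^T x^T) 1%:M.

Definition lead_row n (b c : 'F_2) (x : 'rV['F_2]_n)
    : 'rV['F_2]_((1 + 1) + n) :=
  row_mx (row_mx (const_mx b) (const_mx c)) x.

Lemma embedmx_orth n (x : 'rV['F_2]_n) : embedmx x *m (embedmx x)^T = 1%:M.
Proof.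
by rewrite /embedmx !tr_row_mx trmxK trmx1 !mul_row_col addmx_F2 add0r mul1mx.
Qed.

Lemma lead_row_dot n (x : 'rV['F_2]_n) b c b' c' : x *m x^T = 0 ->
  lead_row b c x *m (lead_row b' c' x)^T = (b * b' + c * c')%:M.
Proof.
move=> xx; rewrite /lead_row !tr_row_mx !mul_row_col xx addr0 !const_mx11.
by rewrite !tr_scalar_mx -!scalar_mxM (raddfD (@scalar_mx _ 1)).
Qed.

Lemma lead_row_embed n (x : 'rV['F_2]_n) b c :
  lead_row b c x *m (embedmx x)^T = (b + c + 1) *: x.
Proof.
rewrite /lead_row /embedmx !tr_row_mx trmxK trmx1 !mul_row_col !const_mx11.
by rewrite !mul_scalar_mx mulmx1 !scalerDl scale1r.
Qed.

Lemma G3mxE k n (G : 'M['F_2]_(k, n)) x :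
  G3mx G x = col_mx (lead_row 1 0 x) (G *m embedmx x).
Proof. by rewrite /G3mx /embedmx !mul_mx_row mulmx1. Qed.

Lemma H3mxE r n (H : 'M['F_2]_(r, n)) x :
  H3mx H x = col_mx (lead_row 0 1 x) (H *m embedmx x).
Proof. by rewrite /H3mx /embedmx !mul_mx_row mulmx1. Qed.

Theorem theorem3 (n k l : nat) (G : 'M['F_2]_(k, n)) (H : 'M['F_2]_(n - k, n))
  (x : 'rV['F_2]_n) :
  (k <= n)%N -> (l <= k)%N ->
  \rank G = k ->                      (* G generates an [n,k] code C *)
  \rank H = (n - k)%N ->
  (H == dualmx G)%MS ->               (* H is a parity check matrix of C *)
  hull_dim G = l ->                   (* dim Hull(C) = l *)
  x *m x^T = 0 ->                     (* x . x = 0 *)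
  [/\ \rank (G3mx G x) = k.+1,        (* C3 is an [n+2,k+1] code *)
      hull_dim (G3mx G x) = l,
      \rank (H3mx H x) = (n - k).+1 &
      (H3mx H x == dualmx (G3mx G x))%MS].
Proof.
move=> le_kn _ rankG rankH /andP[H_dualG _] hullG xx.
have M_orth := embedmx_orth x.
have two0 : (1 + 1 : 'F_2) = 0 by rewrite addrr_pchar2 // pchar_Fp.
have a_unit : lead_row 1 0 x *m (lead_row 1 0 x)^T = 1%:M.
  by rewrite lead_row_dot // mulr1 mulr0 addr0.
have c_unit : lead_row 0 1 x *m (lead_row 0 1 x)^T = 1%:M.
  by rewrite lead_row_dot // mulr0 add0r mulr1.
have c_orth_a : lead_row 0 1 x *m (lead_row 1 0 x)^T = 0.
  by rewrite lead_row_dot // mul0r mulr0 addr0 (raddf0 (@scalar_mx _ 1)).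
have a_orth_M : lead_row 1 0 x *m (embedmx x)^T = 0.
  by rewrite lead_row_embed addr0 two0 scale0r.
have c_orth_M : lead_row 0 1 x *m (embedmx x)^T = 0.
  by rewrite lead_row_embed add0r two0 scale0r.
have HGt : H *m G^T = 0 by apply/eqP; rewrite -sub_kermx.
have rankG3 : \rank (G3mx G x) = k.+1.
  rewrite G3mxE; apply/eqP; apply: row_free_col_ext => //.
  by rewrite /row_free rankG.
have rankH3 : \rank (H3mx H x) = (n - k).+1.
  rewrite H3mxE; apply/eqP; apply: row_free_col_ext => //.
  by rewrite /row_free rankH.
have H3_sub : (H3mx H x <= dualmx (G3mx G x))%MS.
  by rewrite sub_kermx G3mxE H3mxE col_ext_orthogonal.
split=> //.
- have freeM : row_free (embedmx x) by apply/row_freeP; exists (embedmx x)^T.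
  rewrite /hull_dim /dualmx G3mxE (eqmx_rank (hull_col_ext _ _ _ _)) //.
  by rewrite mxrankMfree.
- rewrite /eqmx H3_sub -(mxrank_leqif_sup H3_sub).2 rankH3.
  by rewrite mxrank_ker mxrank_tr rankG3 !add1n subSS subSn // eqxx.
Qed.
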